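(* Let $A\in\mathcal E_n$ with $\operatorname{rk}(A)=r$, and let $A=BCB^T$ with $B\in\mathbb R_+^{n\times r}$ and $C\in\mathbb R_+^{r\times r}$ symmetric. Suppose that the only pair $(X,W)$ satisfying $$X\in\mathbb R_+^{n\times r},\quad W\in\mathbb R_+^{r\times r},\quad W=W^T,\quad X\circ B=0,\quad W\circ C=0,\quad WC=B^TX$$ is $X=0$, $W=0$. Then $A\notin\partial\mathcal E_n$.
   Context: $\mathcal S_n^+$ is the set of $n\times n$ symmetric entrywise nonnegative real matrices; $\mathbb R_+^{p\times q}$ the entrywise nonnegative $p\times q$ real matrices. The SNT-rank $\operatorname{st}_+(A)$ of $A\in\mathcal S_n^+$ is the minimal $k$ such that $A=BCB^T$ with $B\in\mathbb R_+^{n\times k}$ and $C\in\mathcal S_k^+$. $\mathcal E_n=\{A\in\mathcal S_n^+:\operatorname{rk}(A)=\operatorname{st}_+(A)\}$. $\partial\mathcal E_n$ is the set of $A\in\mathcal E_n$ such that $A-\alpha uu^T\notin\mathcal E_n$ for every $\alpha>0$, where $u$ is the Perron eigenvector of $A$ (an entrywise nonnegative unit eigenvector for the spectral radius of $A$). $X\circ B$ denotes the entrywise (Hadamard) product. *)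

From HB Require Import structures.
From mathcomp Require Import all_boot all_order all_algebra.
From mathcomp Require Import reals.
Set Implicit Arguments. Unset Strict Implicit. Unset Printing Implicit Defensive.
Import Order.TTheory GRing.Theory Num.Theory.
Local Open Scope ring_scope.

Section Defs.
Variable R : realType.

Definition nonneg_mx (p q : nat) (M : 'M[R]_(p, q)) : Prop :=
  forall i j, 0 <= M i j.

Definition sym_mx (k : nat) (M : 'M[R]_k) : Prop := M^T = M.

Definition SnPlus (n : nat) (A : 'M[R]_n) : Prop := sym_mx A /\ nonneg_mx A.

Definition hadamard (p q : nat) (X Y : 'M[R]_(p, q)) : 'M[R]_(p, q) :=
  \matrix_(i, j) (X i j * Y i j).

Definition snt_factorizable (n k : nat) (A : 'M[R]_n) : Prop :=
  exists (B : 'M[R]_(n, k)) (C : 'M[R]_k),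
    nonneg_mx B /\ SnPlus C /\ A = B *m C *m B^T.

Definition is_snt_rank (n : nat) (A : 'M[R]_n) (k : nat) : Prop :=
  snt_factorizable k A /\ (forall k', snt_factorizable k' A -> (k <= k')%N).

Definition in_E (n : nat) (A : 'M[R]_n) : Prop :=
  SnPlus A /\ is_snt_rank A (\rank A).

(* rho is the spectral radius of A: the largest modulus of an eigenvalue
   (A is symmetric real in our use, so all eigenvalues are real) *)
Definition is_spectral_radius (n : nat) (A : 'M[R]_n) (rho : R) : Prop :=
  (exists lam, eigenvalue A lam /\ `|lam| = rho) /\
  (forall lam, eigenvalue A lam -> `|lam| <= rho).

Definition perron_vector (n : nat) (A : 'M[R]_n) (u : 'cV[R]_n) : Prop :=
  nonneg_mx u /\ \sum_i (u i 0) ^+ 2 = 1 /\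
  exists rho, is_spectral_radius A rho /\ A *m u = rho *: u.

Definition in_boundaryE (n : nat) (A : 'M[R]_n) : Prop :=
  in_E A /\
  exists u : 'cV[R]_n, perron_vector A u /\
    forall alpha : R, 0 < alpha -> ~ in_E (A - alpha *: (u *m u^T)).

End Defs.

From HB Require Import structures.
From mathcomp Require Import all_boot all_order all_algebra.
From mathcomp Require Import reals.
From mathcomp Require Import ring lra.
Set Implicit Arguments. Unset Strict Implicit. Unset Printing Implicit Defensive.
Import Order.TTheory GRing.Theory Num.Theory.
Local Open Scope ring_scope.

(* Let u be the Perron vector of A, A u = rho u; we exhibit alpha > 0
   with A - alpha u u^T in E_n.
   - By Gordan's theorem of the alternative (proved below by Fourier-Motzkin
     elimination), the hypothesis yields H with (B H)_ik > 0 wherever B_ik = 0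
     and (H C + C H^T)_kl < 0 wherever C_kl = 0 (sign_certificate).
   - With w = C B^T u we get B w = rho u, hence A - e^2 rho^2 u u^T equals
     B (C - e^2 w w^T) B^T, and for small e > 0 this is B' C' B'^T with
     B' = B (1 - e H)^-1 > 0 and C' = (1 - e H)(C - e^2 w w^T)(1 - e H)^T > 0:
     zero entries become positive at first order, the others stay positive
     (perturbed_factorization).
   - rho > 0 since the diagonal of A is positive (diag_pos), so for small e the
     deflation keeps the rank r (rank_deflation), and a factorization of inner
     dimension equal to the rank puts the matrix in E_n (in_E_of_factorization). *)

Section Gordan.
Variable R : realFieldType.

Definition gordan_primal (I J : finType) (P : pred I) (a : I -> J -> R)
    (x : J -> R) : Prop :=
  forall i, P i -> 0 < \sum_j a i j * x j.

Definition gordan_dual (I J : finType) (P : pred I) (a : I -> J -> R)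
    (y : I -> R) : Prop :=
  [/\ forall i, 0 <= y i, forall i, ~~ P i -> y i = 0, exists i, y i != 0
    & forall j, \sum_i y i * a i j = 0].

Lemma exists_between (I : finType) (P Q : pred I) (L U : I -> R) :
  (forall j k, P j -> Q k -> L j < U k) ->
  exists t, (forall j, P j -> L j < t) /\ (forall k, Q k -> t < U k).
Proof.
move=> LU; pose M := 1 + \sum_i (`|L i| + `|U i|).
have sum_ge0 : 0 <= \sum_i (`|L i| + `|U i|).
  by apply: sumr_ge0 => i _; rewrite addr_ge0.
have M_gt0 : 0 < M by rewrite /M; lra.
have bound i : `|L i| < M /\ `|U i| < M.
  have : `|L i| + `|U i| <= \sum_i (`|L i| + `|U i|).
    by rewrite (bigD1 i) //= lerDl; apply: sumr_ge0 => k _; rewrite addr_ge0.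
  by rewrite /M; have := normr_ge0 (L i); have := normr_ge0 (U i); lra.
have Lbound i : - M < L i < M by rewrite -ltr_norml; case: (bound i).
have Ubound i : - M < U i < M by rewrite -ltr_norml; case: (bound i).
pose lo := \big[Order.max/- M]_(j | P j) L j.
pose hi := \big[Order.min/M]_(k | Q k) U k.
have lo_hi : lo < hi.
  apply: bigmax_lt.
    by apply: lt_bigmin => [|k _]; [lra | case/andP: (Ubound k)].
  by move=> j Pj; apply: lt_bigmin => [|k Qk]; [case/andP: (Lbound j)|apply: LU].
exists ((lo + hi) / 2); split.
  by move=> j Pj; apply: le_lt_trans (_ : lo < _); [exact: le_bigmax_cond|lra].
by move=> k Qk; apply: lt_le_trans (_ : hi <= _); [lra|exact: bigmin_le_cond].
Qed.

Section FourierMotzkin.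
Variables (m : nat) (I : finType) (P : pred I) (a : I -> 'I_m.+1 -> R).

(* Eliminating the variable x_0: its coefficients fm_lead and the remaining
   ones fm_tail.  The derived system keeps the rows with fm_lead = 0 and adds,
   for each pair of rows with fm_lead of opposite signs, the positive
   combination in which x_0 cancels. *)
Definition fm_lead i := a i ord0.
Definition fm_tail i (j : 'I_m) := a i (lift ord0 j).

Definition fm_pred (c : I + I * I) : bool :=
  match c with
  | inl i => P i && (fm_lead i == 0)
  | inr p => [&& P p.1, P p.2, 0 < fm_lead p.1 & fm_lead p.2 < 0]
  end.

Definition fm_coef (c : I + I * I) (j : 'I_m) : R :=
  match c with
  | inl i => fm_tail i j
  | inr p => - fm_lead p.2 * fm_tail p.1 j + fm_lead p.1 * fm_tail p.2 j
  end.

(* A solution of the derived system extends to the original one: x_0 must lie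
   between bounds that the pair constraints keep in the right order. *)
Lemma fm_primal x' : gordan_primal fm_pred fm_coef x' ->
  exists x, gordan_primal P a x.
Proof.
move=> Hx'; pose v i := \sum_j fm_tail i j * x' j.
have v_lead0 i : P i -> fm_lead i = 0 -> 0 < v i.
  by move=> Pi si; apply: (Hx' (inl i)); rewrite /= Pi si eqxx.
have v_pair j k : P j -> P k -> 0 < fm_lead j -> fm_lead k < 0 ->
    0 < - fm_lead k * v j + fm_lead j * v k.
  move=> Pj Pk sj sk; have := Hx' (inr (j, k)); rewrite /= Pj Pk sj sk.
  move=> /(_ isT); congr (0 < _).
  by rewrite /v !mulr_sumr -big_split; apply: eq_bigr => t _ /=; ring.
pose L i := - v i / fm_lead i; pose U i := v i / - fm_lead i.
have [t [Lt tU]] : exists t,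
    (forall j, P j && (0 < fm_lead j) -> L j < t) /\
    (forall k, P k && (fm_lead k < 0) -> t < U k).
  apply: exists_between => j k /andP[Pj sj] /andP[Pk sk].
  have sk' : 0 < - fm_lead k by rewrite oppr_gt0.
  rewrite /L /U ltr_pdivrMr // mulrAC ltr_pdivlMr //.
  by have := v_pair j k Pj Pk sj sk; nra.
exists (fun j => if unlift ord0 j is Some j' then x' j' else t) => i Pi.
rewrite big_ord_recl unlift_none.
under eq_bigr do rewrite liftK.
rewrite -/(fm_lead i) -/(v i).
case: (ltrgt0P (fm_lead i)) => si.
- by move: (Lt i); rewrite Pi si /L ltr_pdivrMr // => /(_ isT); nra.
- have si' : 0 < - fm_lead i by rewrite oppr_gt0.
  by move: (tU i); rewrite Pi si /U ltr_pdivlMr // => /(_ isT); nra.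
- by rewrite si mul0r add0r; apply: v_lead0.
Qed.

Section Dual.
Variable y' : I + I * I -> R.
Hypothesis y'_dual : gordan_dual fm_pred fm_coef y'.

(* The weight of constraint i collects the derived constraints it enters. *)
Definition fm_lift i := y' (inl i) + \sum_k y' (inr (i, k)) * - fm_lead k
                                   + \sum_j y' (inr (j, i)) * fm_lead j.

Lemma fm_support c : y' c != 0 -> fm_pred c.
Proof.
case: y'_dual => _ supp _ _ nz; apply/negPn/negP => /supp e.
by rewrite e eqxx in nz.
Qed.

Lemma fm_pair_weights_ge0 j k :
  0 <= y' (inr (j, k)) * - fm_lead k /\ 0 <= y' (inr (j, k)) * fm_lead j.
Proof.
case: y'_dual => ge0 _ _ _.
have [->|/fm_support /and4P[_ _ sj sk]] := eqVneq (y' (inr (j, k))) 0.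
  by rewrite !mul0r.
by rewrite !mulr_ge0 // ?oppr_ge0 ltW.
Qed.

Lemma fm_lift_sum (g : I -> R) : \sum_i fm_lift i * g i =
  \sum_i y' (inl i) * g i +
  \sum_p y' (inr p) * (- fm_lead p.2 * g p.1 + fm_lead p.1 * g p.2).
Proof.
under eq_bigr do rewrite !mulrDl.
rewrite !big_split /= -addrA; congr (_ + _).
under [in RHS]eq_bigr do rewrite mulrDr.
rewrite big_split /=; congr (_ + _).
  transitivity (\sum_i \sum_k y' (inr (i, k)) * (- fm_lead k * g i));
    last by rewrite pair_bigA; apply: eq_bigr => -[].
  by apply: eq_bigr => i _; rewrite mulr_suml; apply: eq_bigr => k _; ring.
transitivity (\sum_i \sum_k y' (inr (i, k)) * (fm_lead i * g k));
  last by rewrite pair_bigA; apply: eq_bigr => -[].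
rewrite exchange_big /=; apply: eq_bigr => i _; rewrite mulr_suml.
by apply: eq_bigr => k _; ring.
Qed.

Lemma fm_lift_dual : gordan_dual P a fm_lift.
Proof.
case: y'_dual => ge0 supp [c0 c0nz] orth; split.
- move=> i; rewrite /fm_lift !addr_ge0 //; apply: sumr_ge0 => k _.
    by case: (fm_pair_weights_ge0 i k).
  by case: (fm_pair_weights_ge0 k i).
- move=> i nPi; rewrite /fm_lift supp /= ?(negbTE nPi) // add0r.
  by rewrite !big1 ?addr0 // => k _; rewrite supp ?mul0r //= (negbTE nPi) ?andbF.
- case: c0 c0nz => [i|[j k]] nz.
    exists i; rewrite gt_eqF // /fm_lift -addrA ltr_pwDl ?lt0r ?nz ?ge0 //.
    by rewrite addr_ge0 // sumr_ge0 // => k _;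
      [case: (fm_pair_weights_ge0 i k) | case: (fm_pair_weights_ge0 k i)].
  exists j; rewrite gt_eqF // /fm_lift -addrA ltr_wpDl ?ge0 // ltr_wpDr //.
    by apply: sumr_ge0 => l _; case: (fm_pair_weights_ge0 l j).
  rewrite (bigD1 k) //= ltr_wpDr //.
    by apply: sumr_ge0 => l _; case: (fm_pair_weights_ge0 j l).
  have /= /and4P[_ _ _ sk] := fm_support nz.
  by rewrite mulr_gt0 // ?oppr_gt0 // lt0r nz ge0.
- move=> j; case: (unliftP ord0 j) => [j'|] ->.
    by rewrite (fm_lift_sum (fm_tail^~ j')); move: (orth j'); rewrite big_sumType.
  rewrite (fm_lift_sum fm_lead) big1 ?add0r; last first.
    move=> i _; have [->|/fm_support /andP[_ /eqP ->]] := eqVneq (y' (inl i)) 0.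
      by rewrite mul0r.
    by rewrite mulr0.
  by rewrite big1 // => p _; rewrite mulrC mulNr (mulrC (fm_lead p.1)) addNr mul0r.
Qed.

End Dual.

End FourierMotzkin.

(* Gordan's theorem of the alternative, by Fourier-Motzkin elimination of the
   variables one at a time. *)
Lemma gordan (m : nat) (I : finType) (P : pred I) (a : I -> 'I_m -> R) :
  (exists x, gordan_primal P a x) \/ (exists y, gordan_dual P a y).
Proof.
elim: m I P a => [|m IH] I P a.
  have [/existsP [i Pi]|nP] := boolP [exists i, P i].
    right; exists (fun k => (k == i)%:R); split=> [k|k nPk||[]//].
    - exact: ler0n.
    - by case: eqP => // ki; rewrite ki Pi in nPk.
    - by exists i; rewrite eqxx oner_eq0.
  by left; exists (fun=> 0) => i Pi; case/existsP: nP; exists i.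
case: (IH _ (fm_pred P a) (fm_coef a)) => [[x' /fm_primal] | [y' /fm_lift_dual]].
  by left.
by right; eexists; eassumption.
Qed.

Definition mxdot (p q : nat) (M N : 'M[R]_(p, q)) : R :=
  \sum_i \sum_j M i j * N i j.

Lemma gordan_mx (I : finType) (P : pred I) (p q : nat) (G : I -> 'M[R]_(p, q)) :
  (exists N, forall i, P i -> 0 < mxdot (G i) N) \/
  (exists y : I -> R, [/\ forall i, 0 <= y i, forall i, ~~ P i -> y i = 0,
     exists i, y i != 0 & \sum_i y i *: G i = 0]).
Proof.
pose a i (k : 'I_#|{: 'I_p * 'I_q}|) := G i (enum_val k).1 (enum_val k).2.
case: (gordan P a) => [[x Hx]|[y [ge0 supp nz orth]]].
  left; exists (\matrix_(u, v) x (enum_rank (u, v))) => i Pi.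
  rewrite /mxdot pair_bigA (reindex (@enum_val _ predT)) /=; last first.
    exact: onW_bij (@enum_val_bij _).
  under eq_bigr do rewrite mxE -surjective_pairing enum_valK.
  exact: Hx.
right; exists y; split=> //; apply/matrixP => u v.
rewrite summxE mxE; apply: etrans (orth (enum_rank (u, v))).
by apply: eq_bigr => i _; rewrite mxE /a enum_rankK.
Qed.

End Gordan.

Section DeltaCalculus.
Variable R : realFieldType.

Lemma mulmx_delta_entry (p q s : nat) (M : 'M[R]_(p, q)) (i : 'I_q) (k : 'I_s) a b :
  (M *m delta_mx i k) a b = M a i * (b == k)%:R.
Proof.
rewrite mxE (bigD1 i) //= big1 ?addr0 => [|c /negbTE ci]; rewrite mxE ?eqxx //.
by rewrite ci mulr0.
Qed.

Lemma delta_mulmx_entry (p q s : nat) (k : 'I_p) (l : 'I_q) (M : 'M[R]_(q, s)) a b :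
  (delta_mx k l *m M) a b = (a == k)%:R * M l b.
Proof.
rewrite mxE (bigD1 l) //= big1 ?addr0 => [|c /negbTE cl]; rewrite mxE ?eqxx ?andbT //.
by rewrite cl andbF mul0r.
Qed.

Lemma mxdot_trmx_delta (n r s : nat) (B : 'M[R]_(n, r)) (N : 'M[R]_(r, s)) i k :
  mxdot (B^T *m delta_mx i k) N = (B *m N) i k.
Proof.
rewrite [RHS]mxE /mxdot; apply: eq_bigr => a _; rewrite (bigD1 k) //= big1 ?addr0.
  by rewrite mulmx_delta_entry mxE eqxx mulr1.
by move=> b /negbTE bk; rewrite mulmx_delta_entry bk mulr0 mul0r.
Qed.

Lemma mxdot_delta_mulmx (p q s : nat) (C : 'M[R]_(q, s)) (N : 'M[R]_(p, s)) k l :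
  mxdot (delta_mx k l *m C) N = (N *m C^T) k l.
Proof.
rewrite [RHS]mxE /mxdot (bigD1 k) //= [X in _ + X]big1 ?addr0 => [|a ak].
  by apply: eq_bigr => b _; rewrite delta_mulmx_entry eqxx mul1r !mxE mulrC.
by rewrite big1 // => b _; rewrite delta_mulmx_entry (negbTE ak) !mul0r.
Qed.

Lemma mxdotN (p q : nat) (M N : 'M[R]_(p, q)) : mxdot (- M) N = - mxdot M N.
Proof.
rewrite /mxdot -sumrN; apply: eq_bigr => i _.
by rewrite -sumrN; apply: eq_bigr => j _; rewrite mxE mulNr.
Qed.

Lemma mxdotD (p q : nat) (M1 M2 N : 'M[R]_(p, q)) :
  mxdot (M1 + M2) N = mxdot M1 N + mxdot M2 N.
Proof.
rewrite /mxdot -big_split; apply: eq_bigr => i _.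
by rewrite -big_split; apply: eq_bigr => j _; rewrite mxE mulrDl.
Qed.

Lemma sum_scale_delta (p q : nat) (f : 'I_p * 'I_q -> R) :
  \sum_c f c *: delta_mx c.1 c.2 = \matrix_(i, j) f (i, j).
Proof.
rewrite [RHS]matrix_sum_delta pair_bigA; apply: eq_bigr => -[i j] _.
by rewrite mxE.
Qed.

Lemma sum_scale_delta_tr (p q : nat) (f : 'I_p * 'I_q -> R) :
  \sum_c f c *: delta_mx c.2 c.1 = (\matrix_(i, j) f (i, j))^T.
Proof.
rewrite -sum_scale_delta linear_sum; apply: eq_bigr => c _.
by rewrite linearZ /= trmx_delta.
Qed.

End DeltaCalculus.

Section ForSmall.
Variable R : realFieldType.

Definition for_small (Q : R -> Prop) : Prop :=
  exists2 d : R, 0 < d & forall e, 0 < e -> e < d -> Q e.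

Lemma for_small_lt (c : R) : 0 < c -> for_small (fun e => e < c).
Proof. by move=> c_gt0; exists c. Qed.

Lemma for_small_and (Q1 Q2 : R -> Prop) :
  for_small Q1 -> for_small Q2 -> for_small (fun e => Q1 e /\ Q2 e).
Proof.
move=> [d1 d1_gt0 H1] [d2 d2_gt0 H2]; exists (Order.min d1 d2).
  by rewrite lt_min d1_gt0 d2_gt0.
by move=> e e_gt0; rewrite lt_min => /andP[? ?]; split; [apply: H1|apply: H2].
Qed.

Lemma for_small_impl (Q1 Q2 : R -> Prop) :
  for_small Q1 -> (forall e, 0 < e -> Q1 e -> Q2 e) -> for_small Q2.
Proof. by move=> [d d_gt0 H] HQ; exists d => // e e0 ed; apply/HQ/H. Qed.

Lemma for_small_all (I : finType) (Q : I -> R -> Prop) :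
  (forall i, for_small (Q i)) -> for_small (fun e => forall i, Q i e).
Proof.
move=> HQ; suff [d d_gt0 H] : for_small (fun e => forall i, i \in enum I -> Q i e).
  by exists d => // e e0 ed i; apply: H; rewrite ?mem_enum.
elim: (enum I) => [|i s IH]; first by exists 1.
apply: for_small_impl (for_small_and (HQ i) IH) _ => e _ [Qi Qs] j.
by rewrite inE => /orP[/eqP -> //|]; apply: Qs.
Qed.

Lemma for_small_witness (Q : R -> Prop) : for_small Q -> exists2 e, 0 < e & Q e.
Proof. by move=> [d d_gt0 H]; exists (d / 2); [|apply: H]; lra. Qed.

Lemma for_small_mul_sq_lt1 (c : R) : 0 <= c -> for_small (fun e => c * e ^+ 2 < 1).
Proof.
move=> c_ge0; apply: for_small_impl (for_small_and (for_small_lt ltr01)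
                 (for_small_lt (divr_gt0 ltr01 (ltr_wpDl c_ge0 ltr01)))) _.
move=> e e_gt0 [e_lt1]; rewrite ltr_pdivlMr ?ltr_wpDl // => ec; rewrite expr2.
have : e * e <= e by rewrite ler_piMr // ltW.
by nra.
Qed.

Lemma for_small_quadratic_pos (a0 a1 K : R) :
  0 < a0 \/ (a0 = 0 /\ 0 < a1) ->
  for_small (fun e => 0 < a0 + a1 * e - K * e ^+ 2).
Proof.
pose c := `|a1| + `|K| + 1.
have c_gt0 : 0 < c by rewrite /c; have := normr_ge0 a1; have := normr_ge0 K; lra.
have a1_ge : - `|a1| <= a1 by rewrite lerNl -normrN ler_norm.
have K_le : K <= `|K| := ler_norm K.
case=> [a0_gt0 | [-> a1_gt0]].
  apply: for_small_impl (for_small_and (for_small_lt ltr01)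
                         (for_small_lt (divr_gt0 a0_gt0 c_gt0))) _.
  move=> e e_gt0 [e_lt1]; rewrite ltr_pdivlMr // /c !mulrDr mulr1 => ec.
  have a1e : - `|a1| * e <= a1 * e by rewrite ler_pM2r.
  have Ke : K * e ^+ 2 <= `|K| * e.
    apply: le_trans (_ : `|K| * e ^+ 2 <= _); first by rewrite ler_pM2r ?exprn_gt0.
    by rewrite ler_wpM2l // expr2 ler_piMr // ltW.
  lra.
apply: for_small_impl (for_small_lt (divr_gt0 a1_gt0 c_gt0)) _.
move=> e e_gt0; rewrite ltr_pdivlMr // /c !mulrDr mulr1 add0r => ec.
have Ke : K * e ^+ 2 <= `|K| * e ^+ 2 by rewrite ler_pM2r ?exprn_gt0.
have : 0 < e * (a1 - `|K| * e).
  rewrite mulr_gt0 // subr_gt0; have := mulr_ge0 (ltW e_gt0) (normr_ge0 a1); lra.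
rewrite mulrBr mulrCA -expr2 mulrC; lra.
Qed.

Lemma for_small_mx_pos (p q : nat) (M : R -> 'M[R]_(p, q)) (M0 M1 : 'M[R]_(p, q))
    (N : R -> 'M[R]_(p, q)) (K d0 : R) :
  0 < d0 -> (forall i j, 0 <= M0 i j) -> (forall i j, M0 i j = 0 -> 0 < M1 i j) ->
  (forall e, 0 < e -> e < d0 ->
     M e = M0 + e *: M1 + e ^+ 2 *: N e /\ forall i j, `|N e i j| <= K) ->
  for_small (fun e => forall i j, 0 < M e i j).
Proof.
move=> d0_gt0 M0_ge0 M1_pos HM.
have entry (ij : 'I_p * 'I_q) : for_small (fun e => 0 < M e ij.1 ij.2).
  have lead : 0 < M0 ij.1 ij.2 \/ (M0 ij.1 ij.2 = 0 /\ 0 < M1 ij.1 ij.2).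
    have [M0_eq0|M0_gt0] := eqVneq (M0 ij.1 ij.2) 0; last by left; rewrite lt0r M0_gt0 M0_ge0.
    by right; split => //; apply: M1_pos.
  apply: for_small_impl (for_small_and (for_small_lt d0_gt0)
                                       (for_small_quadratic_pos K lead)) _.
  move=> e e_gt0 [e_lt pos]; have [-> /(_ ij.1 ij.2)] := HM e e_gt0 e_lt.
  rewrite ler_norml => /andP[N_ge _]; rewrite !mxE.
  have : - K * e ^+ 2 <= N e ij.1 ij.2 * e ^+ 2 by rewrite ler_pM2r ?exprn_gt0.
  lra.
by apply: for_small_impl (for_small_all entry) _ => e _ pos i j; apply: (pos (i, j)).
Qed.

End ForSmall.

Section SmallPerturbation.
Variable R : realFieldType.

Definition abs_sum (p q : nat) (M : 'M[R]_(p, q)) : R :=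
  \sum_i \sum_j `|M i j|.

Lemma abs_sum_row_le (p q : nat) (M : 'M[R]_(p, q)) i :
  \sum_j `|M i j| <= abs_sum M.
Proof.
rewrite /abs_sum (bigD1 i) //= lerDl.
by apply: sumr_ge0 => k _; apply: sumr_ge0 => j _; exact: normr_ge0.
Qed.

Lemma abs_sum_ge0 (p q : nat) (M : 'M[R]_(p, q)) : 0 <= abs_sum M.
Proof. by apply: sumr_ge0 => i _; apply: sumr_ge0 => j _; exact: normr_ge0. Qed.

Lemma entry_le_abs_sum (p q : nat) (M : 'M[R]_(p, q)) i j : `|M i j| <= abs_sum M.
Proof.
apply: le_trans (abs_sum_row_le M i); rewrite (bigD1 j) //= lerDl.
by apply: sumr_ge0 => k _; exact: normr_ge0.
Qed.

Lemma mulmx_entry_bound (p q s : nat) (M : 'M[R]_(p, q)) (Y : 'M[R]_(q, s)) c :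
  0 <= c -> (forall a b, `|Y a b| <= c) ->
  forall i k, `|(M *m Y) i k| <= abs_sum M * c.
Proof.
move=> c_ge0 Yc i k; rewrite mxE; apply: le_trans (ler_norm_sum _ _ _) _.
apply: le_trans (_ : \sum_l `|M i l| * c <= _).
  by apply: ler_sum => l _; rewrite normrM ler_wpM2l.
by rewrite -mulr_suml ler_wpM2r // abs_sum_row_le.
Qed.

Lemma quadratic_entry_bound (p q : nat) (Q0 Q1 Q2 : 'M[R]_(p, q)) (e : R) :
  0 <= e <= 1 -> forall i j,
  `|(Q0 + e *: Q1 + e ^+ 2 *: Q2) i j| <= abs_sum Q0 + abs_sum Q1 + abs_sum Q2.
Proof.
move=> /andP[e_ge0 e_le1] i j; rewrite !mxE.
have Q1_le : `|e * Q1 i j| <= abs_sum Q1.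
  rewrite normrM ger0_norm //.
  by apply: le_trans _ (entry_le_abs_sum Q1 i j); apply: ler_piMl.
have Q2_le : `|e ^+ 2 * Q2 i j| <= abs_sum Q2.
  rewrite normrM ger0_norm ?exprn_ge0 //.
  apply: le_trans _ (entry_le_abs_sum Q2 i j); apply: ler_piMl => //.
  by rewrite exprn_ile1.
have := entry_le_abs_sum Q0 i j; have := ler_normD (Q0 i j) (e * Q1 i j).
have := ler_normD (Q0 i j + e * Q1 i j) (e ^+ 2 * Q2 i j); lra.
Qed.

Lemma for_small_contraction (r : nat) (H : 'M[R]_r) :
  for_small (fun e => 0 <= e /\ e * abs_sum H <= 1 / 2).
Proof.
have S_ge0 := abs_sum_ge0 H.
exists (1 / (2 * abs_sum H + 1)); first by rewrite divr_gt0 //; lra.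
move=> e e_gt0; rewrite ltr_pdivlMr; last lra.
by split; [exact: ltW | nra].
Qed.

Variables (r : nat) (H : 'M[R]_r) (e : R).
Hypotheses (e_ge0 : 0 <= e) (e_small : e * abs_sum H <= 1 / 2).

(* A solution of Y = Y0 + e H Y is at most twice as large as Y0, entrywise:
   the map Y |-> e H Y is a contraction of ratio 1/2. *)
Lemma fixpoint_bound (s : nat) (Y Y0 : 'M[R]_(r, s)) c :
  0 <= c -> (forall a b, `|Y0 a b| <= c) -> Y = Y0 + e *: (H *m Y) ->
  forall a b, `|Y a b| <= 2 * c.
Proof.
move=> c_ge0 Y0c YE.
pose mY := \big[Order.max/0]_(p : 'I_r * 'I_s) `|Y p.1 p.2|.
have Y_le a b : `|Y a b| <= mY.
  exact: (le_bigmax_cond _ (P := xpredT) (fun p => `|Y p.1 p.2|) (j := (a, b))).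
have mY_ge0 : 0 <= mY by apply: bigmax_ge_id.
have Y_half a b : `|Y a b| <= c + mY / 2.
  rewrite {1}YE mxE [X in _ + X]mxE; apply: le_trans (ler_normD _ _) _; apply: lerD => //.
  rewrite normrM ger0_norm //.
  apply: le_trans (_ : e * (abs_sum H * mY) <= _).
    by apply: ler_wpM2l => //; exact: mulmx_entry_bound.
  by have := ler_wpM2r mY_ge0 e_small; rewrite mulrA; lra.
have : mY <= c + mY / 2.
  by apply: bigmax_le => [|p _]; [lra|apply: Y_half].
by move=> mY_le a b; apply: le_trans (Y_le a b) _; lra.
Qed.

Lemma small_perturbation_unit : (1%:M - e *: H) \in unitmx.
Proof.
rewrite -unitmx_tr -row_free_unit; apply: inj_row_free => v vF.
have v_fix : v^T = 0 + e *: (H *m v^T).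
  have : (1%:M - e *: H) *m v^T = 0.
    by rewrite -[LHS]trmxK trmx_mul trmxK vF trmx0.
  by rewrite mulmxBl mul1mx -scalemxAl add0r => /eqP; rewrite subr_eq0 => /eqP.
have zero_le0 a b : `|(0 : 'cV[R]_r) a b| <= 0 by rewrite mxE normr0.
apply/trmx_inj/matrixP => a b; rewrite trmx0 [RHS]mxE; apply/normr0_eq0/eqP.
by rewrite eq_le normr_ge0 andbT -(mulr0 2) (fixpoint_bound (lexx 0) zero_le0 v_fix).
Qed.

Lemma small_perturbation_inv :
  invmx (1%:M - e *: H) = 1%:M + e *: (H *m invmx (1%:M - e *: H)).
Proof.
apply/eqP; rewrite -subr_eq scalemxAl -[X in X - _]mul1mx -mulmxBl.
by rewrite mulmxV // small_perturbation_unit.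
Qed.

Lemma small_perturbation_inv_bound a b : `|invmx (1%:M - e *: H) a b| <= 2.
Proof.
rewrite -[2]mulr1; apply: fixpoint_bound ler01 _ small_perturbation_inv a b.
by move=> i j; rewrite mxE; case: eqP; rewrite ?normr0 ?normr1.
Qed.

Lemma small_perturbation_mulmx (n : nat) (B : 'M[R]_(n, r)) :
  B *m invmx (1%:M - e *: H) =
  B + e *: (B *m H) + e ^+ 2 *: (B *m H *m H *m invmx (1%:M - e *: H)).
Proof.
rewrite {1}small_perturbation_inv mulmxDr mulmx1 -scalemxAr.
rewrite {1}small_perturbation_inv !mulmxDr mulmx1 -!scalemxAr !mulmxA.
by rewrite scalerDr scalerA -expr2 addrA.
Qed.

End SmallPerturbation.

Lemma congruence_expansion (R : comNzRingType) (r : nat) (H C P : 'M[R]_r) (e : R) :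
  (1%:M - e *: H) *m (C - e ^+ 2 *: P) *m (1%:M - e *: H)^T =
  C + e *: - (H *m C + C *m H^T) +
  e ^+ 2 *: ((H *m C *m H^T - P) + e *: (H *m P + P *m H^T) +
             e ^+ 2 *: - (H *m P *m H^T)).
Proof.
rewrite [(1%:M - e *: H)^T]linearB /= trmx1 [(e *: H)^T]linearZ /=.
do 3 rewrite ?mulmxBl ?mulmxBr ?mul1mx ?mulmx1 -?scalemxAl -?scalemxAr ?mulmxA.
move: (H *m C *m H^T) (H *m P *m H^T) (H *m C) (H *m P) (C *m H^T) (P *m H^T).
by move=> HCH HPH HC HP CH PH; apply/matrixP => a b; rewrite !mxE; ring.
Qed.

Lemma nonneg_mulmx (R : realType) (p q s : nat) (X : 'M[R]_(p, q)) (Y : 'M[R]_(q, s)) :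
  nonneg_mx X -> nonneg_mx Y -> nonneg_mx (X *m Y).
Proof. by move=> X_ge0 Y_ge0 a b; rewrite mxE sumr_ge0 // => c _; rewrite mulr_ge0. Qed.

Lemma nonneg_trmx (R : realType) (p q : nat) (X : 'M[R]_(p, q)) :
  nonneg_mx X -> nonneg_mx X^T.
Proof. by move=> X_ge0 a b; rewrite mxE. Qed.

Lemma perturbed_left_factor_pos (R : realFieldType) (n r : nat) (B : 'M[R]_(n, r))
    (H : 'M[R]_r) :
  (forall i k, 0 <= B i k) -> (forall i k, B i k = 0 -> 0 < (B *m H) i k) ->
  for_small (fun e => (1%:M - e *: H) \in unitmx /\
                      forall i k, 0 < (B *m invmx (1%:M - e *: H)) i k).
Proof.
move=> B_ge0 HB; have [d0 d0_gt0 small] := for_small_contraction H.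
have B'_pos : for_small (fun e =>
    forall i k, 0 < (B *m invmx (1%:M - e *: H)) i k).
  apply: (for_small_mx_pos (N := fun e => B *m H *m H *m invmx (1%:M - e *: H))
            (K := abs_sum (B *m H *m H) * 2) d0_gt0 B_ge0 HB).
  move=> e e_gt0 e_lt; have [e_ge0 eS] := small e e_gt0 e_lt.
  split; first exact: small_perturbation_mulmx.
  by apply: mulmx_entry_bound => //; exact: small_perturbation_inv_bound.
apply: for_small_impl (for_small_and B'_pos (for_small_lt d0_gt0)) _.
move=> e e_gt0 [B'_gt0 e_lt]; have [e_ge0 eS] := small e e_gt0 e_lt.
by split=> //; apply: small_perturbation_unit.
Qed.

Lemma perturbed_middle_factor_pos (R : realFieldType) (r : nat) (C H P : 'M[R]_r) :
  (forall k l, 0 <= C k l) ->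
  (forall k l, C k l = 0 -> (H *m C + C *m H^T) k l < 0) ->
  for_small (fun e => forall k l,
    0 < ((1%:M - e *: H) *m (C - e ^+ 2 *: P) *m (1%:M - e *: H)^T) k l).
Proof.
move=> C_ge0 HC.
have HC' k l : C k l = 0 -> 0 < (- (H *m C + C *m H^T)) k l.
  by move=> /HC HC_lt; rewrite mxE oppr_gt0.
pose Q2 := H *m C *m H^T - P; pose Q3 := H *m P + P *m H^T.
pose Q4 := - (H *m P *m H^T).
apply: (for_small_mx_pos (N := fun e => Q2 + e *: Q3 + e ^+ 2 *: Q4)
          (K := abs_sum Q2 + abs_sum Q3 + abs_sum Q4) ltr01 C_ge0 HC').
move=> e e_gt0 e_lt1; split; first exact: congruence_expansion.
by apply: quadratic_entry_bound; rewrite (ltW e_gt0) (ltW e_lt1).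
Qed.

Lemma perturbed_factorization (R : realType) (n r : nat) (B : 'M[R]_(n, r))
    (C H P : 'M[R]_r) :
  nonneg_mx B -> nonneg_mx C -> C^T = C -> P^T = P ->
  (forall i k, B i k = 0 -> 0 < (B *m H) i k) ->
  (forall k l, C k l = 0 -> (H *m C + C *m H^T) k l < 0) ->
  for_small (fun e => snt_factorizable r (B *m (C - e ^+ 2 *: P) *m B^T)).
Proof.
move=> B_ge0 C_ge0 C_sym P_sym HB HC.
apply: for_small_impl (for_small_and (perturbed_left_factor_pos B_ge0 HB)
                         (perturbed_middle_factor_pos P C_ge0 HC)) _.
move=> e _ [[F_unit B'_gt0] C'_gt0]; set F := 1%:M - e *: H in F_unit B'_gt0 C'_gt0 *.
exists (B *m invmx F), (F *m (C - e ^+ 2 *: P) *m F^T).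
split; first by move=> i k; apply: ltW.
split; first split.
- by rewrite /sym_mx !trmx_mul trmxK linearB /= linearZ /= C_sym P_sym mulmxA.
- by move=> k l; apply: ltW.
have FG : invmx F *m F = 1%:M by rewrite mulVmx.
rewrite trmx_mul !mulmxA -[B *m _ *m F]mulmxA FG mulmx1.
by rewrite -[_ *m F^T *m _]mulmxA -trmx_mul FG trmx1 mulmx1.
Qed.

Lemma rank_le_snt_factorizable (R : realType) (n k : nat) (A : 'M[R]_n) :
  snt_factorizable k A -> (\rank A <= k)%N.
Proof.
by move=> [B [C [_ [_ ->]]]]; apply: leq_trans (mxrankM_maxl _ _) _; exact: rank_leq_col.
Qed.

Lemma in_E_of_factorization (R : realType) (n k : nat) (A : 'M[R]_n)
    (B : 'M[R]_(n, k)) (C : 'M[R]_k) :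
  nonneg_mx B -> SnPlus C -> A = B *m C *m B^T -> (k <= \rank A)%N -> in_E A.
Proof.
move=> B_ge0 [C_sym C_ge0] AE k_le.
have fact_k : snt_factorizable k A by exists B, C.
have rkA : \rank A = k.
  by apply/eqP; rewrite eqn_leq k_le rank_le_snt_factorizable.
split; first split.
- by rewrite /sym_mx AE !trmx_mul trmxK C_sym mulmxA.
- by rewrite AE; apply: nonneg_mulmx; [apply: nonneg_mulmx|apply: nonneg_trmx].
by rewrite rkA; split=> // k'; rewrite -rkA; apply: rank_le_snt_factorizable.
Qed.

Lemma rank_deflation (R : fieldType) (n : nat) (A : 'M[R]_n) (u : 'cV[R]_n)
    (rho alpha : R) :
  A^T = A -> A *m u = rho *: u -> u^T *m u = 1%:M -> alpha != rho ->
  (\rank A <= \rank (A - alpha *: (u *m u^T))%R)%N.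
Proof.
move=> A_sym Au u_unit alpha_neq.
set A' := A - _.
have A'u : A' *m u = (rho - alpha) *: u.
  by rewrite mulmxBl Au -scalemxAl -mulmxA u_unit mulmx1 scalerBl.
have A'_sym : A'^T = A' by rewrite linearB /= linearZ /= trmx_mul trmxK A_sym.
have uA' : u^T *m A' = (rho - alpha) *: u^T.
  by rewrite -[A']A'_sym -trmx_mul A'u linearZ.
have uu_in : (u *m u^T <= A')%MS.
  have ra_neq0 : rho - alpha != 0 by rewrite subr_eq0 eq_sym.
  have -> : u *m u^T = ((rho - alpha)^-1 *: u) *m (u^T *m A').
    by rewrite uA' -scalemxAr -scalemxAl scalerA mulfV // scale1r.
  by rewrite mulmxA submxMl.
apply: mxrankS; rewrite -(subrK (alpha *: (u *m u^T)) A) -/A'.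
by apply: addmx_sub; [exact: submx_refl | exact: scalemx_sub].
Qed.

Definition no_dual_pair (R : realType) (n r : nat) (B : 'M[R]_(n, r)) (C : 'M[R]_r) :=
  forall (X : 'M[R]_(n, r)) (W : 'M[R]_r),
    nonneg_mx X -> nonneg_mx W -> W^T = W ->
    hadamard X B = 0 -> hadamard W C = 0 -> W *m C = B^T *m X ->
    X = 0 /\ W = 0.

Section Certificate.
Variables (R : realType) (n r : nat) (B : 'M[R]_(n, r)) (C : 'M[R]_r).
Hypotheses (B_ge0 : nonneg_mx B) (C_ge0 : nonneg_mx C) (C_sym : C^T = C).
Hypothesis no_pair : no_dual_pair B C.

Lemma C_symE k l : C l k = C k l.
Proof. by rewrite -{2}C_sym mxE. Qed.

(* No row of B vanishes: otherwise X = e_ik, W = 0 would be a nontrivial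
   dual pair. *)
Lemma row_nonzero : (0 < r)%N -> forall i, exists k, B i k != 0.
Proof.
move=> r_gt0 i; have [/existsP[k Bk]|zero_row] := boolP [exists k, B i k != 0].
  by exists k.
have Bi0 k : B i k = 0 by apply/eqP; apply: contraNT zero_row => Bk; apply/existsP; exists k.
pose k0 := Ordinal r_gt0.
have [X0 _] : delta_mx i k0 = 0 :> 'M[R]_(n, r) /\ (0 : 'M[R]_r) = 0.
  apply: no_pair.
  - by move=> a b; rewrite mxE ler0n.
  - by move=> a b; rewrite mxE.
  - exact: trmx0.
  - apply/matrixP => a b; rewrite !mxE.
    by have [->|] := eqVneq a i; [rewrite Bi0 mulr0 | rewrite mul0r].
  - by apply/matrixP => a b; rewrite !mxE mul0r.
  - by apply/matrixP => a b; rewrite mul0mx mulmx_delta_entry !mxE Bi0 mul0r.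
by move/matrixP/(_ i k0): X0; rewrite !mxE !eqxx => /eqP; rewrite oner_eq0.
Qed.

(* All diagonal entries of B C B^T are positive: a vanishing one would give
   the nontrivial dual pair X = e_jj B C, W = (row j B)^T (row j B). *)
Lemma diag_pos : (0 < r)%N -> forall j, 0 < (B *m C *m B^T) j j.
Proof.
move=> r_gt0 j; rewrite lt0r; apply/andP; split; last first.
  apply: nonneg_mulmx; [exact: nonneg_mulmx | exact: nonneg_trmx].
apply/negP => /eqP Ajj0.
have BCB0 k : (B *m C) j k * B j k = 0.
  have sum0 : \sum_l (B *m C) j l * B j l = 0.
    apply: (etrans _ Ajj0); rewrite [RHS]mxE.
    by apply: eq_bigr => l _; rewrite [B^T _ _]mxE.
  apply: (psumr_eq0P _ sum0) => // l _.
  by rewrite mulr_ge0 ?nonneg_mulmx.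
have BBC0 k l : B j k * B j l * C k l = 0.
  have sum0 := BCB0 l; rewrite mxE mulr_suml in sum0.
  rewrite mulrAC; apply: (psumr_eq0P _ sum0) => // m _.
  by rewrite !mulr_ge0.
pose W := (row j B)^T *m row j B.
have [_ W0] : delta_mx j j *m (B *m C) = 0 /\ W = 0.
  apply: no_pair.
  - by move=> a b; rewrite delta_mulmx_entry mulr_ge0 ?ler0n ?nonneg_mulmx.
  - by move=> a b; rewrite mxE big_ord1 !mxE mulr_ge0.
  - by rewrite /W trmx_mul trmxK.
  - apply/matrixP => a b; rewrite mxE delta_mulmx_entry [RHS]mxE.
    by have [->|_] := eqVneq a j; [rewrite mul1r BCB0 | rewrite !mul0r].
  - by apply/matrixP => a b; rewrite !mxE big_ord1 !mxE BBC0.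
  - rewrite /W !rowE !mulmxA trmx_mul trmx_delta -(mulmxA _ (delta_mx j 0)).
    by rewrite mul_delta_mx.
have [k Bjk] := row_nonzero r_gt0 j.
by move/matrixP/(_ k k): W0; rewrite !mxE big_ord1 !mxE => /eqP; rewrite mulf_eq0 orbb (negbTE Bjk).
Qed.

(* Constraints of the Gordan system: index inl (i, k) for each zero entry of B,
   inr (k, l) for each zero entry of C; cert_form c is the matrix of the
   linear form of H that must become positive. *)
Definition cert_pred (c : 'I_n * 'I_r + 'I_r * 'I_r) : bool :=
  match c with inl p => B p.1 p.2 == 0 | inr p => C p.1 p.2 == 0 end.

Definition cert_form (c : 'I_n * 'I_r + 'I_r * 'I_r) : 'M[R]_r :=
  match c with
  | inl p => B^T *m delta_mx p.1 p.2
  | inr p => - ((delta_mx p.1 p.2 + delta_mx p.2 p.1) *m C)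
  end.

Definition cert_X (y : 'I_n * 'I_r + 'I_r * 'I_r -> R) : 'M[R]_(n, r) :=
  \matrix_(i, k) y (inl (i, k)).
Definition cert_Y (y : 'I_n * 'I_r + 'I_r * 'I_r -> R) : 'M[R]_r :=
  \matrix_(k, l) y (inr (k, l)).

Lemma cert_form_combination (y : 'I_n * 'I_r + 'I_r * 'I_r -> R) :
  \sum_c y c *: cert_form c =
  B^T *m cert_X y - (cert_Y y + (cert_Y y)^T) *m C.
Proof.
rewrite big_sumType /= /cert_X /cert_Y.
rewrite -(sum_scale_delta (fun p => y (inl p))) mulmx_sumr.
rewrite -(sum_scale_delta_tr (fun p => y (inr p))).
rewrite -(sum_scale_delta (fun p => y (inr p))) -big_split mulmx_suml -sumrN.
congr (_ + _); apply: eq_bigr => p _; first by rewrite scalemxAr.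
by rewrite scalerN scalemxAl scalerDr.
Qed.

(* By Gordan's alternative, either some H pushes all zero entries of B and C
   in the right direction to first order, or the dual weights give a
   nontrivial dual pair (X, Y + Y^T), which is excluded. *)
Lemma sign_certificate : exists H : 'M[R]_r,
  (forall i k, B i k = 0 -> 0 < (B *m H) i k) /\
  (forall k l, C k l = 0 -> (H *m C + C *m H^T) k l < 0).
Proof.
have [[H HH]|[y [y_ge0 y_supp [c y_nz] y_comb]]] := gordan_mx cert_pred cert_form.
  exists H; split=> [i k Bik | k l Ckl].
    by have := HH (inl (i, k)); rewrite /= Bik eqxx mxdot_trmx_delta; apply.
  have := HH (inr (k, l)); rewrite /= Ckl eqxx mxdotN mulmxDl mxdotD !mxdot_delta_mulmx.
  have CHt : (C *m H^T) k l = (H *m C) l k by rewrite -{1}C_sym -trmx_mul mxE.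
  by move=> /(_ isT); rewrite C_sym oppr_gt0 => lt0; rewrite mxE CHt.
pose W := cert_Y y + (cert_Y y)^T.
have [X0 W0] : cert_X y = 0 /\ W = 0.
  apply: no_pair.
  - by move=> i k; rewrite mxE.
  - by move=> k l; rewrite !mxE addr_ge0.
  - by rewrite /W linearD /= trmxK addrC.
  - apply/matrixP => i k; rewrite !mxE.
    have [->|Bik] := eqVneq (B i k) 0; first by rewrite mulr0.
    by rewrite y_supp ?mul0r //= Bik.
  - apply/matrixP => k l; rewrite !mxE.
    have [->|Ckl] := eqVneq (C k l) 0; first by rewrite mulr0.
    have C'kl : C l k != 0 by rewrite C_symE.
    by rewrite (y_supp (inr (k, l))) ?(y_supp (inr (l, k))) ?addr0 ?mul0r.
  - move: (cert_form_combination y); rewrite y_comb => /eqP.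
    by rewrite eq_sym subr_eq0 => /eqP.
exfalso; case: c y_nz => [[i k]|[k l]] /eqP; apply.
  by move/matrixP/(_ i k): X0; rewrite !mxE.
move/matrixP/(_ k l): W0; rewrite !mxE => /eqP.
by rewrite paddr_eq0 ?y_ge0 // => /andP[/eqP].
Qed.

End Certificate.

Lemma eigenvalue_pos (R : realType) (n : nat) (A : 'M[R]_n) (u : 'cV[R]_n) (rho : R) :
  nonneg_mx A -> (forall j, 0 < A j j) -> nonneg_mx u -> u != 0 ->
  A *m u = rho *: u -> 0 < rho.
Proof.
move=> A_ge0 Adiag u_ge0 u_neq0 Au.
have [j uj] : exists j, u j 0 != 0.
  apply/existsP; apply: contraNT u_neq0; rewrite negb_exists => /forallP u0.
  by apply/eqP/matrixP => i k; rewrite (ord1 k) mxE; apply/eqP; rewrite -[_ == _]negbK u0.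
have uj_gt0 : 0 < u j 0 by rewrite lt0r uj u_ge0.
rewrite -(pmulr_lgt0 _ uj_gt0); apply: lt_le_trans (mulr_gt0 (Adiag j) uj_gt0) _.
have := congr1 (fun M : 'cV[R]_n => M j 0) Au; rewrite !mxE => <-.
rewrite (bigD1 j) //= lerDl; apply: sumr_ge0 => l _; exact: mulr_ge0.
Qed.

Lemma unit_cV_neq0 (R : realType) (n : nat) (u : 'cV[R]_n) :
  \sum_i u i 0 ^+ 2 = 1 -> u != 0.
Proof.
move=> u_norm; apply/eqP => u0; move: u_norm; rewrite u0 big1 => [/eqP|i _].
  by rewrite eq_sym oner_eq0.
by rewrite mxE expr0n.
Qed.

Lemma unit_cV_trmx_mul (R : realType) (n : nat) (u : 'cV[R]_n) :
  \sum_i u i 0 ^+ 2 = 1 -> u^T *m u = 1%:M.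
Proof.
move=> u_norm; apply/matrixP => a b; rewrite (ord1 a) (ord1 b) !mxE /= -u_norm.
by apply: eq_bigr => i _; rewrite mxE expr2.
Qed.

Theorem mainTheorem13 (R : realType) (n r : nat) (A : 'M[R]_n)
  (B : 'M[R]_(n, r)) (C : 'M[R]_r) :
  in_E A -> \rank A = r -> A != 0 ->
  nonneg_mx B -> nonneg_mx C -> C^T = C -> A = B *m C *m B^T ->
  (forall (X : 'M[R]_(n, r)) (W : 'M[R]_r),
      nonneg_mx X -> nonneg_mx W -> W^T = W ->
      hadamard X B = 0 -> hadamard W C = 0 -> W *m C = B^T *m X ->
      X = 0 /\ W = 0) ->
  ~ in_boundaryE A.
Proof.
move=> [[A_sym A_ge0] _] rkA A_neq0 B_ge0 C_ge0 C_sym AE no_pair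
  [_ [u [[u_ge0 [u_norm [rho [_ Au]]]] boundary]]].
have r_gt0 : (0 < r)%N by rewrite -rkA lt0n mxrank_eq0.
have rho_gt0 : 0 < rho.
  apply: eigenvalue_pos A_ge0 _ u_ge0 (unit_cV_neq0 u_norm) Au.
  by move=> j; rewrite AE diag_pos.
have [H [HB HC]] := sign_certificate C_sym no_pair.
pose w := C *m (B^T *m u).
have Bw : B *m w = rho *: u by rewrite /w !mulmxA -AE Au.
have w_sym : (w *m w^T)^T = w *m w^T by rewrite trmx_mul trmxK.
have [e e_gt0 [[B' [C' [B'_ge0 [C'_SnPlus A'E]]]] rho_e]] := for_small_witness
  (for_small_and (perturbed_factorization B_ge0 C_ge0 C_sym w_sym HB HC)
                 (for_small_mul_sq_lt1 (ltW rho_gt0))).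
pose alpha := rho ^+ 2 * e ^+ 2.
apply: (boundary alpha); first by rewrite mulr_gt0 ?exprn_gt0.
have deflate : A - alpha *: (u *m u^T) = B *m (C - e ^+ 2 *: (w *m w^T)) *m B^T.
  have uu : B *m (w *m w^T) *m B^T = rho ^+ 2 *: (u *m u^T).
    rewrite mulmxA -mulmxA -trmx_mul Bw linearZ /= -scalemxAl -scalemxAr.
    by rewrite scalerA -expr2.
  by rewrite mulmxBr mulmxBl -AE -scalemxAr -scalemxAl uu scalerA mulrC.
apply: (in_E_of_factorization B'_ge0 C'_SnPlus); first by rewrite deflate.
rewrite -rkA; apply: rank_deflation A_sym Au (unit_cV_trmx_mul u_norm) _.
by rewrite lt_eqF // /alpha expr2 -mulrA gtr_pMr.
Qed.
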